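(* Let $F$ be a forest, let $k,s\ge 0$ be integers, and for $1\le i\le s$ let $\mathcal{F}_i$ be a set of $s!\,k$ paths of $F$ that are pairwise anticomplete. Then there exist $P^i_1,\ldots,P^i_k\in\mathcal{F}_i$ for $1\le i\le s$ such that these $sk$ paths are pairwise anticomplete.
   Context: Two subgraphs of a graph are anticomplete if their vertex sets are disjoint and no edge of the graph joins a vertex of one to a vertex of the other. *)

From mathcomp Require Import all_boot.
Set Implicit Arguments. Unset Strict Implicit. Unset Printing Implicit Defensive.

Definition simple_graph (T : finType) (e : rel T) : Prop :=
  symmetric e /\ irreflexive e.

Definition forest (T : finType) (e : rel T) : Prop :=
  simple_graph e /\
  forall c : seq T, uniq c -> 3 <= size c -> ~~ cycle e c.

Definition is_gpath (T : finType) (e : rel T) (A : {set T}) : Prop :=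
  exists (x : T) (p : seq T), [/\ uniq (x :: p), path e x p & A = [set:: x :: p]].

Definition anticomplete (T : finType) (e : rel T) (A B : {set T}) : bool :=
  [disjoint A & B] && [forall x in A, forall y in B, ~~ e x y].

From mathcomp Require Import all_boot.
Set Implicit Arguments. Unset Strict Implicit. Unset Printing Implicit Defensive.

(* In a forest, every nonempty family of paths contains a path P together with a vertex
   or edge {a, b} such that every path of the family touching P (sharing a vertex with P
   or joined to it by an edge) passes through a or b: delete a leaf of the forest and
   induct.  Any two paths through {a, b} touch, so P touches at most one path of each
   pairwise anticomplete family F_i.  Choosing P and discarding everything it touches
   therefore costs each family at most one path, and a greedy choice succeeds as soon as
   every family has s * k <= s! * k paths. *)

Lemma sum_subn_pred1 (I : finType) (m : I -> nat) i0 :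
  0 < m i0 -> \sum_i (m i - (i == i0)) = (\sum_i m i).-1.
Proof.
move=> mi0; rewrite (bigD1 i0) // [in RHS](bigD1 i0) //= eqxx subn1.
rewrite -[in RHS](prednK mi0) addSn /=; congr (_ + _).
by apply: eq_bigr => i /negbTE ->; rewrite subn0.
Qed.

Lemma cards_setIdC (U : finType) (A : {set U}) (p : pred U) :
  #|[set x in A | p x]| + #|[set x in A | ~~ p x]| = #|A|.
Proof.
rewrite -(cardsID [set x | p x] A) -setIdE; congr (_ + _).
by apply: eq_card => x; rewrite !inE andbC.
Qed.

Lemma set_rcons (A : finType) (s : seq A) a : [set:: rcons s a] = a |: [set:: s].
Proof. by apply/setP=> z; rewrite !inE mem_rcons inE. Qed.

Definition fiber (I U : finType) (X : {set I * U}) i := [set x | (i, x) \in X].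

Lemma fiber_setU1 (I U : finType) (X : {set I * U}) i j x :
  fiber ((j, x) |: X) i = if i == j then x |: fiber X i else fiber X i.
Proof.
by apply/setP=> y; case: eqVneq => [->|ij]; rewrite !inE xpair_eqE ?eqxx ?(negbTE ij).
Qed.

Lemma exists_fiber_enumeration (I U : finType) (X : {set I * U}) k :
    (forall i, #|fiber X i| = k) ->
  exists f : I -> 'I_k -> U, (forall i j, (i, f i j) \in X) /\
    (forall i i' j j', (i, j) != (i', j') -> (i, f i j) != (i', f i' j')).
Proof.
move=> cardX; exists (fun i j => enum_val (cast_ord (esym (cardX i)) j)); split.
  by move=> i j; have := enum_valP (cast_ord (esym (cardX i)) j); rewrite inE.
move=> i i' j j'; rewrite !xpair_eqE; have [<- /= | //] := eqVneq i i'.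
by apply: contraNneq => /enum_val_inj/cast_ord_inj ->.
Qed.

Section ForestPaths.
Variables (T : finType) (e : rel T).
Hypotheses (e_sym : symmetric e) (e_irr : irreflexive e).
Hypothesis e_acyclic : forall c : seq T, uniq c -> 3 <= size c -> ~~ cycle e c.

Lemma path_adj_head x p w : uniq (x :: p) -> path e x p -> w \in p -> e x w ->
  exists r, p = w :: r.
Proof.
move=> + + wp; case/splitPr: wp => [[|a p1] p2]; first by exists p2.
rewrite -!cat_cons -cat_rcons cat_uniq => /andP [u_cyc _].
rewrite -cat_rcons cat_path => /andP [path_cyc _] xw.
have := e_acyclic u_cyc; rewrite size_rcons ltnS => /(_ isT).
by rewrite rcons_cons /cycle rcons_path path_cyc last_rcons e_sym xw.
Qed.

Definition leaf (W : {set T}) v :=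
  [forall y in W, forall z in W, e v y ==> e v z ==> (y == z)].

Lemma leafP (W : {set T}) v :
  reflect (forall y z, y \in W -> z \in W -> e v y -> e v z -> y = z) (leaf W v).
Proof.
apply: (iffP forallP) => [lv y z yW zW vy vz|lv y].
  by move: (lv y); rewrite yW => /forallP /(_ z); rewrite zW vy vz => /eqP.
apply/implyP=> yW; apply/forall_inP=> z zW.
by apply/implyP=> vy; apply/implyP=> vz; apply/eqP/lv.
Qed.

Lemma nonleaf_fresh_nbr (W : {set T}) x p :
    uniq (x :: p) -> path e x p -> ~~ leaf W x ->
  exists w, [/\ w \in W, e x w & w \notin x :: p].
Proof.
move=> uxp xp nlx.
have [y [z [yW zW xy xz yz]]] : exists y z, [/\ y \in W, z \in W, e x y, e x z & y != z].
  case/forall_inPn: nlx => y yW /forall_inPn [z zW].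
  by rewrite !negb_imply => /and3P [xy xz yz]; exists y, z.
have inp u : e x u -> u \in x :: p -> u \in p.
  by rewrite inE => xu /predU1P [ux|//]; rewrite ux e_irr in xu.
case yp: (y \in x :: p); last by exists y; rewrite yp.
case zp: (z \in x :: p); last by exists z; rewrite zp.
have [r1 py] := path_adj_head uxp xp (inp _ xy yp) xy.
have [r2 pz] := path_adj_head uxp xp (inp _ xz zp) xz.
by move: yz; rewrite py in pz; case: pz => ->; rewrite eqxx.
Qed.

Lemma exists_leaf (W : {set T}) : W != set0 -> exists2 v, v \in W & leaf W v.
Proof.
case/set0Pn=> x0 x0W; apply/exists_inP; apply: contraT => no_leaf.
have long_path n : exists x p,
    [/\ size p = n, uniq (x :: p), path e x p & {subset x :: p <= W}].
  elim: n => [|n [x [p [<- uxp xp pW]]]].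
    by exists x0, [::]; split=> // y /predU1P [->|].
  have xNleaf : ~~ leaf W x.
    by apply: contra no_leaf => lx; apply/exists_inP; exists x => //; apply/pW/mem_head.
  have [w [wW xw wNp]] := nonleaf_fresh_nbr uxp xp xNleaf.
  exists w, (x :: p); split=> //; first by rewrite cons_uniq wNp.
    by rewrite /= e_sym xw.
  by move=> y /predU1P [->|/pW].
have [x [p [sp uxp _ _]]] := long_path #|T|.
by have := max_card (mem (x :: p)); rewrite (card_uniqP uxp) /= sp ltnn.
Qed.

Lemma gpath_delete_leaf (W P : {set T}) v :
    is_gpath e P -> P \subset W -> v \in P -> leaf W v -> P != [set v] ->
  is_gpath e (P :\ v) /\ exists2 u, u \in P & e v u.
Proof.
case=> x [p [uxp xp ->]] /subsetP sPW + /leafP lv; rewrite inE.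
case/predU1P=> [-> {v lv sPW}|vp].
  case: p uxp xp => [|y p]; first by rewrite set_cons set_nil setU0 eqxx.
  rewrite cons_uniq => /andP [xNyp uyp] /andP [xy yp] _.
  split; last by exists y; rewrite // !inE eqxx orbT.
  by exists y, p; rewrite set_cons setU1K ?inE.
case/splitPr: vp uxp xp sPW => p1 p2.
rewrite -cat_cons cat_uniq => /and3P [ux1 Nx1 _].
rewrite cat_path => /andP [xp1 /andP [lastv vp2]] sPW.
have last_in : last x p1 \in [set:: (x :: p1) ++ v :: p2].
  by rewrite inE mem_cat mem_last.
case: p2 => [|z p2] in Nx1 vp2 sPW last_in * => nPv.
  split; last by exists (last x p1); rewrite // e_sym.
  exists x, p1; rewrite cats1 set_rcons setU1K // inE.
  by apply: contra Nx1 => vx1; rewrite /= vx1.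
case/andP: vp2 => vz _.
have z_last : last x p1 = z.
  apply: lv (sPW _ last_in) (sPW _ _) _ vz; last by rewrite e_sym.
  by rewrite inE mem_cat !inE eqxx !orbT.
by have /hasPn/(_ z) := Nx1; rewrite -z_last mem_last !inE eqxx orbT => /(_ isT).
Qed.

Lemma gpath_neq0 P : is_gpath e P -> P != set0.
Proof. by case=> x [p [_ _ ->]]; apply/set0Pn; exists x; rewrite inE mem_head. Qed.

Definition adj_or_eq x y := (x == y) || e x y.

Lemma adj_or_eq_refl : reflexive adj_or_eq.
Proof. by move=> x; rewrite /adj_or_eq eqxx. Qed.

Lemma adj_or_eq_sym : symmetric adj_or_eq.
Proof. by move=> x y; rewrite /adj_or_eq eq_sym e_sym. Qed.

Definition touch (P Q : {set T}) := exists x y, [/\ x \in P, y \in Q & adj_or_eq x y].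

Lemma touchP P Q : reflect (touch P Q) (~~ anticomplete e P Q).
Proof.
rewrite /anticomplete negb_and -setI_eq0.
apply: (iffP orP) => [[/set0Pn [x] | /forall_inPn [x xP /forall_inPn [y yQ]]]|].
- by rewrite inE => /andP [xP xQ]; exists x, x; rewrite adj_or_eq_refl.
- by rewrite negbK => xy; exists x, y; rewrite /adj_or_eq xy orbT.
case=> x [y [xP yQ /orP [/eqP xy | xy]]]; [left | right].
  by apply/set0Pn; exists x; rewrite inE xP xy.
by apply/forall_inPn; exists x => //; apply/forall_inPn; exists y; rewrite ?negbK.
Qed.

Lemma touch_sym P Q : touch P Q -> touch Q P.
Proof. by case=> x [y [xP yQ xy]]; exists y, x; rewrite adj_or_eq_sym. Qed.

Lemma anticomplete_sym P Q : anticomplete e P Q = anticomplete e Q P.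
Proof. by apply/idP/idP; apply: contraLR => /touchP/touch_sym/touchP. Qed.

Lemma anticompleteNself P : P != set0 -> ~~ anticomplete e P P.
Proof. by case/set0Pn=> x xP; apply/touchP; exists x, x; rewrite adj_or_eq_refl. Qed.

Lemma touch_delete_leaf (W P Q : {set T}) v :
    is_gpath e P -> is_gpath e Q -> P \subset W -> Q \subset W -> leaf W v ->
    P != [set v] -> Q != [set v] ->
  touch P Q -> touch (P :\ v) (Q :\ v).
Proof.
move=> gP gQ sPW sQW lv nPv nQv [x [y [xP yQ xy]]].
wlog xv : P Q x y gP gQ sPW sQW nPv nQv xP yQ xy / x = v => [hwlog|].
  have [xv|xNv] := eqVneq x v; first exact: hwlog xy xv.
  have [yv|yNv] := eqVneq y v; last by exists x, y; rewrite !inE xNv yNv.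
  by apply/touch_sym/(hwlog Q P y x); rewrite // adj_or_eq_sym.
subst x; have [_ [u uP vu]] := gpath_delete_leaf gP sPW xP lv nPv.
have uQ : u \in Q.
  have uW := subsetP sPW _ uP; case/orP: xy => [/eqP vy | vy].
    subst y; have [_ [u' u'Q vu']] := gpath_delete_leaf gQ sQW yQ lv nQv.
    by rewrite (leafP _ _ lv _ _ uW (subsetP sQW _ u'Q) vu vu').
  by rewrite (leafP _ _ lv _ _ uW (subsetP sQW _ yQ) vu vy).
have uNv : u != v by apply: contraTneq vu => ->; rewrite e_irr.
by exists u, u; rewrite !inE uNv uP uQ adj_or_eq_refl.
Qed.

Lemma exists_path_touched_via_edge (W : {set T}) (S : {set {set T}}) :
    {in S, forall P, is_gpath e P /\ P \subset W} -> S != set0 ->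
  exists P a b, [/\ P \in S, adj_or_eq a b &
    {in S, forall Q, touch P Q -> (a \in Q) || (b \in Q)}].
Proof.
have [n] := ubnP #|W|; elim: n W S => // n IH W S ltWn hS /set0Pn [P0 P0S].
have [gP0 sP0W] := hS _ P0S.
have W0 : W != set0 by apply: contraNneq (gpath_neq0 gP0) => W0; rewrite -subset0 -W0.
have [v vW lv] := exists_leaf W0.
have [vS | vNS] := boolP ([set v] \in S).
  pose b := odflt v [pick u in W | e v u].
  exists [set v], v, b; split=> //.
    by rewrite /b /adj_or_eq; case: pickP => [u /andP [_ ->]|_]; rewrite ?eqxx ?orbT.
  move=> Q QS [_ [y [/set1P -> yQ /orP [/eqP vy | vy]]]]; first by rewrite vy yQ.
  have yW := subsetP (hS Q QS).2 _ yQ.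
  rewrite /b; case: pickP => [u /andP [uW vu] | /(_ y)]; last by rewrite /= yW vy.
  by rewrite -(leafP _ _ lv _ _ yW uW vy vu) yQ orbT.
have nPv P : P \in S -> P != [set v] by move=> PS; apply: contraNneq vNS => <-.
have gPv P : P \in S -> is_gpath e (P :\ v).
  move=> PS; have [gP sPW] := hS _ PS; have [vP | vNP] := boolP (v \in P).
    by case: (gpath_delete_leaf gP sPW vP lv (nPv _ PS)).
  suff -> : P :\ v = P by [].
  by apply/setDidPl; rewrite disjoint_sym disjoints1.
have hSv : {in [set P :\ v | P in S], forall P, is_gpath e P /\ P \subset W :\ v}.
  by move=> _ /imsetP [P PS ->]; split; [apply: gPv | apply: setSD; case: (hS _ PS)].
have ltWvn : #|W :\ v| < n by move: ltWn; rewrite (cardsD1 v) vW.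
have Sv0 : [set P :\ v | P in S] != set0 by rewrite imset_eq0; apply/set0Pn; exists P0.
have [_ [a [b [/imsetP [P PS ->] ab touch_ab]]]] := IH _ _ ltWvn hSv Sv0.
exists P, a, b; split=> // Q QS tPQ.
have [[gP sPW] [gQ sQW]] := (hS _ PS, hS _ QS).
have := touch_delete_leaf gP gQ sPW sQW lv (nPv _ PS) (nPv _ QS) tPQ.
move/(touch_ab _ (imset_f _ QS)).
by rewrite !inE => /orP [/andP [_ ->] | /andP [_ ->]]; rewrite ?orbT.
Qed.

Lemma card_touching_le1 (F : {set {set T}}) P a b :
    adj_or_eq a b -> {in F &, forall Q R, Q != R -> anticomplete e Q R} ->
    {in F, forall Q, touch P Q -> (a \in Q) || (b \in Q)} ->
  #|[set Q in F | ~~ anticomplete e P Q]| <= 1.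
Proof.
move=> ab antiF hitF; apply/card_le1_eqP => Q R; rewrite !inE.
move=> /andP [QF /touchP /(hitF _ QF) Qab] /andP [RF /touchP /(hitF _ RF) Rab].
have hit_ab (A : {set T}) : (a \in A) || (b \in A) -> exists2 x, x \in A & x \in [:: a; b].
  by case/orP; [exists a | exists b]; rewrite ?inE ?eqxx ?orbT.
have [[x xQ xab] [y yR yab]] := (hit_ab Q Qab, hit_ab R Rab).
have tQR : touch Q R.
  exists x, y; split=> //; move: xab yab; rewrite !inE.
  by do 2![case/orP=> /eqP ->]; rewrite ?adj_or_eq_refl // adj_or_eq_sym.
apply/eqP; apply: contraLR (introT (touchP _ _) tQR); rewrite negbK eq_sym.
exact: antiF.
Qed.

Definition pairwise_anticomplete (U : finType) (f : U -> {set T}) (X : {set U}) :=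
  {in X &, forall p q, p != q -> anticomplete e (f p) (f q)}.

Lemma pairwise_anticomplete_setU1 (U : finType) (f : U -> {set T}) X p :
    pairwise_anticomplete f X -> {in X, forall q, anticomplete e (f p) (f q)} ->
  pairwise_anticomplete f (p |: X).
Proof.
move=> antiX antip q r /setU1P [-> | qX] /setU1P [-> | rX]; rewrite ?eqxx // => qr.
- exact: antip.
- by rewrite anticomplete_sym; apply: antip.
- exact: antiX qr.
Qed.

Lemma exists_path_touching_le1 (I : finType) (F : I -> {set {set T}}) (J : {pred I}) :
    (forall i, {in F i, forall P, is_gpath e P}) ->
    (forall i, pairwise_anticomplete id (F i)) ->
    (exists2 i, i \in J & F i != set0) ->
  exists i0 P, [/\ i0 \in J, P \in F i0 &
    forall i, i \in J -> #|[set Q in F i | ~~ anticomplete e P Q]| <= 1].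
Proof.
move=> gF antiF [j Jj Fj0]; pose S := \bigcup_(i in J) F i.
have hS : {in S, forall P, is_gpath e P /\ P \subset setT}.
  by move=> P /bigcupP [i _ /gF gP]; rewrite subsetT.
have S0 : S != set0.
  by apply: contraNneq Fj0 => S0; rewrite -subset0 -S0 (bigcup_sup j Jj).
have [P [a [b [/bigcupP [i0 Ji0 PF] ab hitS]]]] := exists_path_touched_via_edge hS S0.
exists i0, P; split=> // i Ji; apply: card_touching_le1 ab (antiF i) _ => Q QF.
by apply: hitS; apply/bigcupP; exists i.
Qed.

Lemma greedy_pairwise_anticomplete (I : finType) (F : I -> {set {set T}}) (m : I -> nat) :
    (forall i, {in F i, forall P, is_gpath e P}) ->
    (forall i, pairwise_anticomplete id (F i)) ->
    (forall i, 0 < m i -> \sum_j m j <= #|F i|) ->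
  exists X : {set I * {set T}}, [/\ {in X, forall p, p.2 \in F p.1},
    forall i, #|fiber X i| = m i & pairwise_anticomplete snd X].
Proof.
move Nm: (\sum_j m j) => N; elim: N F m Nm => [|N IH] F m Nm gF antiF bigF.
  have m0 i : m i = 0 by apply/eqP; move/eqP: Nm; rewrite sum_nat_eq0 => /forallP /(_ i).
  exists set0; split=> [p|i|p q]; rewrite ?inE // m0; apply/eqP.
  by rewrite cards_eq0; apply/eqP/setP=> x; rewrite !inE.
have /forallPn [j] : ~~ [forall (j | true), m j == 0] by rewrite -sum_nat_eq0 Nm.
rewrite /= -lt0n => mj.
have Fj0 : F j != set0 by rewrite -card_gt0 (leq_trans _ (bigF j mj)) ?Nm.
have [i0 [P [mi0 PF touch_le1]]] :=
  exists_path_touching_le1 (J := [pred i | 0 < m i]) gF antiF (ex_intro2 _ _ j mj Fj0).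
pose F' i := [set Q in F i | anticomplete e P Q].
pose m' i := m i - (i == i0).
have Nm' : \sum_j m' j = N by rewrite sum_subn_pred1 ?Nm.
have gF' i : {in F' i, forall Q, is_gpath e Q}.
  by move=> Q; rewrite inE => /andP [/gF].
have antiF' i : pairwise_anticomplete id (F' i).
  move=> Q R; rewrite !inE => /andP [QF _] /andP [RF _]; exact: (antiF i).
have bigF' i : 0 < m' i -> N <= #|F' i|.
  move=> m'i; have mi : 0 < m i by apply: leq_trans m'i (leq_subr _ _).
  move: (bigF i mi); rewrite -(cards_setIdC (F i) (anticomplete e P)).
  by move/leq_trans/(_ (leq_add (leqnn _) (touch_le1 i mi))); rewrite addn1 ltnS.
have [X [XF' cardX antiX]] := IH F' m' Nm' gF' antiF' bigF'.
have PNF' i : P \notin F' i.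
  by rewrite inE negb_and anticompleteNself ?orbT ?(gpath_neq0 (gF _ _ PF)).
exists ((i0, P) |: X); split.
- by move=> p /setU1P [-> // | /XF']; rewrite inE => /andP [].
- move=> i; rewrite fiber_setU1; have [-> | ii0] /= := eqVneq i i0.
    have PNX : P \notin fiber X i0 by rewrite inE; apply: contra (PNF' i0) => /XF'.
    by rewrite cardsU1 PNX cardX /m' eqxx subn1 add1n prednK.
  by rewrite cardX /m' (negbTE ii0) subn0.
by apply: pairwise_anticomplete_setU1 => // q /XF'; rewrite inE => /andP [].
Qed.

End ForestPaths.

Theorem mainTheorem7 (T : finType) (e : rel T) (k s : nat)
    (Fam : 'I_s -> {set {set T}}) :
  forest e ->
  (forall i : 'I_s, #|Fam i| = s`! * k) ->
  (forall (i : 'I_s) (P : {set T}), P \in Fam i -> is_gpath e P) ->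
  (forall (i : 'I_s) (P Q : {set T}), P \in Fam i -> Q \in Fam i -> P != Q ->
     anticomplete e P Q) ->
  exists Pch : 'I_s -> 'I_k -> {set T},
    (forall i j, Pch i j \in Fam i) /\
    (forall (i i' : 'I_s) (j j' : 'I_k), (i, j) != (i', j') ->
       anticomplete e (Pch i j) (Pch i' j')).
Proof.
move=> [[e_sym e_irr] e_acyclic] cardF gF antiF.
have bigF i : 0 < k -> \sum_(j < s) k <= #|Fam i|.
  by rewrite cardF sum_nat_const card_ord leq_mul2r fact_geq orbT.
have [X [XF cardX antiX]] :=
  greedy_pairwise_anticomplete e_sym e_irr e_acyclic gF antiF bigF.
have [f [fX f_inj]] := exists_fiber_enumeration cardX.
exists f; split=> [i j | i i' j j' ij]; first exact: XF (fX i j).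
exact: antiX (fX i j) (fX i' j') (f_inj _ _ _ _ ij).
Qed.
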